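(* Let $M$ be an enveloping matroid for a delta-matroid $D$ on $[n,\overline{n}]$, and let $S\in\operatorname{AdS}_n$. Then $S$ is independent in $M$ if and only if $S$ is independent in $D$.
   Context: Let $[n,\overline{n}]=\{1,\dots,n,\overline{1},\dots,\overline{n}\}$ with involution $a\mapsto\overline{a}$; $\overline{S}=\{\overline{a}:a\in S\}$. A subset is admissible if it contains at most one of $i,\overline{i}$ for each $i$; $\operatorname{AdS}_n$ is the set of admissible subsets. In $\mathbb{R}^n$ set $e_{\overline{i}}=-e_i$, $e_S=\sum_{a\in S}e_a$. A delta-matroid $D$ on $[n,\overline{n}]$ is a nonempty collection $\mathcal{F}$ of admissible sets of size $n$ (feasible sets) such that $P(D)=\operatorname{Conv}\{e_B:B\in\mathcal{F}\}$ has all edges parallel to some $e_i$ or $e_i\pm e_j$. An admissible $S$ is independent in $D$ if it is contained in a feasible set (equivalently $\max_{B\in\mathcal{F}}(|S\cap B|-|\overline{S}\cap B|)=|S|$). For $S\subseteq[n,\overline{n}]$ let $u_S\in\mathbb{R}^{[n,\overline{n}]}$ be its indicator vector; for a matroid $M$ on the $2n$-element ground set $[n,\overline{n}]$ let $P(M)=\operatorname{Conv}\{u_B:B\text{ a basis of }M\}$. Let $\operatorname{env}\colon\mathbb{R}^{[n,\overline{n}]}\to\mathbb{R}^n$, $(x_1,\dots,x_n,x_{\overline{1}},\dots,x_{\overline{n}})\mapsto(x_1-x_{\overline{1}},\dots,x_n-x_{\overline{n}})$. $M$ is an enveloping matroid for $D$ if $\operatorname{env}(P(M))=P(D)$. 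*)

From HB Require Import structures.
From mathcomp Require Import all_boot all_order all_algebra.
From mathcomp Require Import reals.
Set Implicit Arguments. Unset Strict Implicit. Unset Printing Implicit Defensive.
Import Order.TTheory GRing.Theory Num.Theory.
Local Open Scope ring_scope.

(* The ground set [n, nbar]: inl i stands for i, inr i stands for \bar i. *)
Definition gset (n : nat) : finType := ('I_n + 'I_n)%type.

Definition bar (n : nat) (a : gset n) : gset n :=
  match a with inl i => inr i | inr i => inl i end.

Definition admissible (n : nat) (S : {set gset n}) : Prop :=
  forall i : 'I_n, ~~ ((inl i \in S) && (inr i \in S)).

Section Geometry.
Variable R : realType.

Definition evec (n : nat) (i : 'I_n) : 'I_n -> R :=
  fun k => (k == i)%:R.

Definition eS (n : nat) (S : {set gset n}) : 'I_n -> R :=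
  fun k => \sum_(a in S) match a with
                         | inl i => evec i k
                         | inr i => - evec i k end.

Definition uS (n : nat) (S : {set gset n}) : gset n -> R :=
  fun a => (a \in S)%:R.

Definition env (n : nat) (x : gset n -> R) : 'I_n -> R :=
  fun i => x (inl i) - x (inr i).

Definition dot (K : finType) (c x : K -> R) : R := \sum_(k : K) c k * x k.

Definition conv (K A : finType) (F : {set A}) (p : A -> K -> R) (x : K -> R) : Prop :=
  exists l : A -> R,
    [/\ forall a, 0 <= l a,
        \sum_(a in F) l a = 1
      & forall k, x k = \sum_(a in F) l a * p a k].

(* [u, v] (u <> v, both among the generating points) is an edge of
   Conv{p b : b in F}: some linear functional c attains its maximum over
   the polytope exactly on a face contained in the line through u and v. *)
Definition is_edge (K A : finType) (F : {set A}) (p : A -> K -> R)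
    (u v : K -> R) : Prop :=
  [/\ exists2 b, b \in F & (forall k, p b k = u k),
      exists2 b, b \in F & (forall k, p b k = v k),
      exists k, u k != v k &
      exists c : K -> R,
        dot c u = dot c v /\
        forall b, b \in F ->
          dot c (p b) <= dot c u /\
          (dot c (p b) = dot c u ->
             exists t : R, forall k, p b k = u k + t * (v k - u k))].

Definition good_direction (n : nat) (w : 'I_n -> R) : Prop :=
  exists t : R, t != 0 /\ exists i : 'I_n,
    (forall k, w k = t * evec i k) \/
    exists j : 'I_n, j != i /\
      ((forall k, w k = t * (evec i k + evec j k)) \/
       (forall k, w k = t * (evec i k - evec j k))).

Definition PD (n : nat) (F : {set {set gset n}}) : ('I_n -> R) -> Prop :=
  conv F (@eS n).

Definition is_delta_matroid (n : nat) (F : {set {set gset n}}) : Prop :=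
  [/\ F != set0,
      (forall B, B \in F -> admissible B /\ #|B| = n)
    & forall u v, is_edge F (@eS n) u v ->
        good_direction (fun k => v k - u k)].

Definition PM (n : nat) (Bs : {set {set gset n}}) : (gset n -> R) -> Prop :=
  conv Bs (@uS n).

Definition enveloping (n : nat) (Bs F : {set {set gset n}}) : Prop :=
  forall y : 'I_n -> R,
    (exists x, PM Bs x /\ forall i, y i = env x i) <-> PD F y.

End Geometry.

Definition is_matroid (T : finType) (Bs : {set {set T}}) : Prop :=
  Bs != set0 /\
  forall B1 B2, B1 \in Bs -> B2 \in Bs ->
    forall x, x \in B1 :\: B2 ->
      exists2 y, y \in B2 :\: B1 & (y |: (B1 :\ x)) \in Bs.

Definition indep_matroid (T : finType) (Bs : {set {set T}}) (S : {set T}) : Prop :=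
  exists2 B, B \in Bs & S \subset B.

Definition indep_delta (n : nat) (F : {set {set gset n}}) (S : {set gset n}) : Prop :=
  admissible S /\ exists2 B, B \in F & S \subset B.

(** The linear functional [e_S . e_X = |S ∩ X| - |X ∩ bar⁻¹(S)|] on [P(D)] pulls
    back along [env] to a functional on [P(M)], so maxima of these functionals are
    attained at feasible sets of [D] and at bases of [M] alike.  Maximizing
    [e_T . -] for a feasible [T] yields a basis containing [T] and no element of
    [bar T], which gives the easy direction.  Conversely, among the bases
    containing [S] pick one, [B], with the fewest elements of [bar S]; the feasible
    set [T] maximizing [e_S . -] must contain [S], for otherwise extending [S]
    inside [S ∪ B''], where [B''] is a basis obtained from [T] as above, produces a
    basis containing [S] with fewer elements of [bar S] than [B]. *)

From mathcomp Require Import all_boot all_order all_algebra.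
From mathcomp Require Import reals ring lra zify.
Set Implicit Arguments. Unset Strict Implicit. Unset Printing Implicit Defensive.
Import Order.TTheory GRing.Theory Num.Theory.
Local Open Scope ring_scope.

Arguments bar {n}.

Section Envelope.
Variable R : realType.

Lemma eq_dotr (K : finType) (c x y : K -> R) : x =1 y -> dot c x = dot c y.
Proof. by move=> exy; apply: eq_bigr => k _; rewrite exy. Qed.

Lemma conv_vertex (K A : finType) (F : {set A}) (p : A -> K -> R) a :
  a \in F -> conv F p (p a).
Proof.
move=> aF; exists (fun b => (b == a)%:R); split.
- by move=> b; rewrite ler0n.
- by rewrite (bigD1 a) //= eqxx big1 ?addr0 // => b /andP[_ /negbTE ->].
- move=> k; rewrite (bigD1 a) //= eqxx mul1r big1 ?addr0 // => b /andP[_ /negbTE ->].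
  by rewrite mul0r.
Qed.

Lemma conv_dot_le_vertex (K A : finType) (F : {set A}) (p : A -> K -> R) x c :
  conv F p x -> exists2 a, a \in F & dot c x <= dot c (p a).
Proof.
case=> l [l_ge0 l_sum1 xE].
have dot_xE : dot c x = \sum_(a in F) l a * dot c (p a).
  rewrite /dot; under eq_bigr => k _ do rewrite xE mulr_sumr.
  rewrite exchange_big /=; apply: eq_bigr => a _.
  by rewrite mulr_sumr; apply: eq_bigr => k _; ring.
have [a0 a0F] : exists a0, a0 \in F.
  apply/set0Pn; apply: contra_eqN l_sum1 => /eqP ->.
  by rewrite big_set0 eq_sym oner_eq0.
have [m mF m_max] := arg_maxP (fun b => dot c (p b)) a0F.
exists m => //; rewrite dot_xE -[leRHS]mul1r -l_sum1 mulr_suml.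
by apply: ler_sum => b bF; apply: ler_wpM2l; [exact: l_ge0 | exact: m_max].
Qed.

Definition envT n (c : 'I_n -> R) (a : gset n) : R :=
  match a with inl i => c i | inr i => - c i end.

Lemma dot_env n (c : 'I_n -> R) x : dot c (env x) = dot (envT c) x.
Proof.
rewrite /dot big_sumType /= -big_split; apply: eq_bigr => k _.
by rewrite /env mulrBr mulNr.
Qed.

Lemma env_uS n (X : {set gset n}) : env (uS R X) =1 eS R X.
Proof.
move=> k; rewrite /eS /env /uS (big_mkcond (fun a => a \in X)) big_sumType /=.
rewrite (bigD1 k) //= big1 ?addr0; last first.
  by move=> i /negbTE ik; rewrite /evec eq_sym ik; case: ifP.
rewrite (bigD1 k) //= big1 ?addr0; last first.
  by move=> i /negbTE ik; rewrite /evec eq_sym ik; case: ifP; rewrite ?oppr0.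
by rewrite /evec eqxx; do 2!case: ifP => _; rewrite ?oppr0 ?subr0 ?sub0r.
Qed.

Lemma envT_eS n (T : {set gset n}) a :
  envT (eS R T) a = uS R T a - uS R T (bar a).
Proof. by case: a => i; rewrite /= -env_uS /env ?opprB. Qed.

Lemma dot_eS n (T X : {set gset n}) :
  dot (eS R T) (eS R X) = #|T :&: X|%:R - #|X :&: bar @^-1: T|%:R.
Proof.
rewrite -(eq_dotr _ (env_uS X)) dot_env /dot -!sumr_const.
rewrite !(big_mkcond (fun a => a \in _)) -sumrB; apply: eq_bigr => a _.
rewrite envT_eS /uS !inE.
by case: (a \in T); case: (a \in X); case: (bar a \in T); rewrite /= ?mulr1 ?mulr0 ?subrr ?subr0 ?sub0r.
Qed.

Section Enveloping.
Variables (n : nat) (Bs F : {set {set gset n}}).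
Hypothesis envelope : enveloping R Bs F.

Lemma enveloping_basis_le_feasible c B : B \in Bs ->
  exists2 T, T \in F & dot c (eS R B) <= dot c (eS R T).
Proof.
move=> BB; apply: conv_dot_le_vertex; apply/envelope.
by exists (uS R B); split; [exact: conv_vertex | move=> i; rewrite env_uS].
Qed.

Lemma enveloping_feasible_le_basis c T : T \in F ->
  exists2 B, B \in Bs & dot c (eS R T) <= dot c (eS R B).
Proof.
move=> TF; have [x [xM xE]] := (envelope (eS R T)).2 (conv_vertex _ TF).
have [B BB le_xB] := conv_dot_le_vertex (envT c) xM.
exists B => //; rewrite (eq_dotr _ xE) -(eq_dotr _ (env_uS B)) !dot_env.
exact: le_xB.
Qed.

End Enveloping.
End Envelope.

Lemma barK n : involutive (@bar n).
Proof. by case. Qed.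

Lemma admissible_barF n (T : {set gset n}) a :
  admissible T -> a \in T -> (bar a \in T) = false.
Proof. by move=> admT; case: a => i /= iT; apply/negbTE; have := admT i; rewrite iT ?andbT. Qed.

Lemma admissible_preim_bar n (T : {set gset n}) :
  admissible T -> T :&: bar @^-1: T = set0.
Proof.
move=> admT; apply/setP => a; rewrite !inE.
by case aT: (a \in T); rewrite ?(admissible_barF admT aT).
Qed.

Lemma transversal_mem n (B : {set gset n}) a :
  admissible B -> #|B| = n -> (a \in B) || (bar a \in B).
Proof.
move=> admB cardB.
suff : a \in B :|: bar @^-1: B by rewrite !inE.
have -> : B :|: bar @^-1: B = setT; last by rewrite inE.
apply/eqP; rewrite eqEcard subsetT cardsT /= card_sum card_ord.
have := cardsUI B (bar @^-1: B).
rewrite admissible_preim_bar // cards0 addn0 card_preimset ?cardB => [-> //|].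
exact: inv_inj (@barK n).
Qed.

Lemma card_le_dot_eS (R : realType) n (T X : {set gset n}) :
  #|T|%:R <= dot (eS R T) (eS R X) -> T \subset X /\ X :&: bar @^-1: T = set0.
Proof.
rewrite dot_eS lerBrDr -natrD ler_nat => le_T.
have le_TX : (#|T :&: X| <= #|T|)%N by rewrite subset_leq_card // subsetIl.
split; last by apply/eqP; rewrite -cards_eq0; lia.
by apply/setIidPl/eqP; rewrite eqEcard subsetIl; lia.
Qed.

Lemma dot_eS_admissible (R : realType) n (T : {set gset n}) :
  admissible T -> dot (eS R T) (eS R T) = #|T|%:R.
Proof. by move=> admT; rewrite dot_eS setIid admissible_preim_bar // cards0 subr0. Qed.

Lemma basis_between (T : finType) (Bs : {set {set T}}) (S B1 B2 : {set T}) :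
  is_matroid Bs -> B1 \in Bs -> S \subset B1 -> B2 \in Bs ->
  exists2 B, B \in Bs & S \subset B /\ B \subset S :|: B2.
Proof.
move=> [_ exchange] + + B2B.
move: {2}#|_| (leqnn #|B1 :\: (S :|: B2)|) => k.
elim: k B1 => [|k IH] B1 le_k B1B SB1.
  by exists B1 => //; split => //; move: le_k; rewrite leqn0 cards_eq0 setD_eq0.
have [B1sub|] := boolP (B1 \subset S :|: B2); first by exists B1.
rewrite -setD_eq0 -cards_eq0 -lt0n => /card_gt0P[x].
rewrite !inE negb_or => /andP[/andP[xS xB2] xB1].
have xB1B2 : x \in B1 :\: B2 by rewrite inE xB2 xB1.
have [y] := exchange B1 B2 B1B B2B x xB1B2.
rewrite inE => /andP[yB1 yB2] B'B.
apply: (IH _ _ B'B); last first.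
  apply/subsetP => z zS; rewrite !inE (subsetP SB1) // andbT.
  by apply/orP; right; apply: contraNneq xS => <-.
have sub : (y |: (B1 :\ x)) :\: (S :|: B2) \subset (B1 :\: (S :|: B2)) :\ x.
  apply/subsetP => z; rewrite !inE negb_or => /andP[/andP[zS zB2]].
  by case/orP => [/eqP zy|/andP[-> ->]]; [rewrite zy yB2 in zB2 | rewrite zS zB2].
have cardE : #|B1 :\: (S :|: B2)| = #|(B1 :\: (S :|: B2)) :\ x|.+1.
  by rewrite (cardsD1 x) !inE negb_or xB1 xS xB2.
by apply: leq_trans (subset_leq_card sub) _; rewrite -ltnS -cardE.
Qed.

Section EnvelopingMatroid.
Variables (R : realType) (n : nat) (F Bs : {set {set gset n}}).
Hypothesis envelope : enveloping R Bs F.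

Lemma feasible_sub_basis T : admissible T -> T \in F ->
  exists2 B, B \in Bs & T \subset B /\ B :&: bar @^-1: T = set0.
Proof.
move=> admT TF; have [B BB le_TB] := enveloping_feasible_le_basis envelope (eS R T) TF.
by exists B => //; apply: (@card_le_dot_eS R); rewrite -(dot_eS_admissible R admT).
Qed.

Hypothesis feasible_transversal : forall T, T \in F -> admissible T /\ #|T| = n.
Hypothesis matroid : is_matroid Bs.

Lemma preim_bar_sub (S T B B' : {set gset n}) :
  admissible S -> T \in F -> B :&: bar @^-1: T = set0 -> B' \subset S :|: B ->
  B' :&: bar @^-1: S \subset T :&: bar @^-1: S.
Proof.
move=> admS TF BT0 B'sub; have [admT cardT] := feasible_transversal TF.
apply/subsetP => a; rewrite !inE => /andP[aB' baS]; rewrite baS andbT.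
have /setUP[aS|aB] := subsetP B'sub a aB'; first by rewrite (admissible_barF admS aS) in baS.
have /orP[//|baT] := transversal_mem a admT cardT.
by move/setP/(_ a): BT0; rewrite !inE aB baT.
Qed.

Lemma indep_matroid_sub_feasible S : admissible S -> indep_matroid Bs S ->
  exists2 T, T \in F & S \subset T.
Proof.
move=> admS [B0 B0B SB0].
pose basis_over B := (B \in Bs) && (S \subset B).
have basis_B0 : basis_over B0 by rewrite /basis_over B0B SB0.
have [B /andP[BB SB] B_min] := arg_minnP (fun B => #|B :&: bar @^-1: S|) basis_B0.
have [T TF le_BT] := enveloping_basis_le_feasible envelope (eS R S) BB.
exists T => //; apply: contraT => STN.
have lt_ST : (#|S :&: T| < #|S|)%N.
  rewrite (ltn_leqif (subset_leqif_cards (subsetIl S T))).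
  by apply: contraNN STN => /eqP/setIidPl.
have lt_TB : (#|T :&: bar @^-1: S| < #|B :&: bar @^-1: S|)%N.
  by move: le_BT lt_ST; rewrite !dot_eS (setIidPl SB) -!(ltr_nat R); lra.
have [B'' B''B [_ B''T0]] := feasible_sub_basis (feasible_transversal TF).1 TF.
have [B' B'B [SB' B'sub]] := basis_between matroid BB SB B''B.
have basis_B' : basis_over B' by rewrite /basis_over B'B SB'.
have le_B'T := subset_leq_card (preim_bar_sub admS TF B''T0 B'sub).
by have := B_min B' basis_B'; rewrite leqNgt (leq_ltn_trans le_B'T lt_TB).
Qed.

End EnvelopingMatroid.

Theorem proposition3p12 (R : realType) (n : nat)
    (F : {set {set gset n}}) (Bs : {set {set gset n}}) (S : {set gset n}) :
  is_delta_matroid R F ->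
  is_matroid Bs ->
  enveloping R Bs F ->
  admissible S ->
  (indep_matroid Bs S <-> indep_delta F S).
Proof.
move=> [_ feasible_transversal _] matroid envelope admS; split.
  by move=> indepS; split => //; exact: indep_matroid_sub_feasible indepS.
case=> _ [T TF ST]; have [admT _] := feasible_transversal T TF.
have [B BB [TB _]] := feasible_sub_basis envelope admT TF.
by exists B => //; apply: subset_trans TB.
Qed.
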